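(* Let $p>1$, $p'=p/(p-1)$, $C>0$, and define on $\Omega_C=\{(F,\mathbf{f},M):\mathbf{f}\ge0,\ \mathbf{f}^p\le F,\ 0\le M\le C\}$ $$\mathbb{B}(F,\mathbf{f},M;C)=C\left[(p')^pF-\frac{(p\mathbf{f})^p}{(p-1)\,(M/C+p-1)^{p-1}}\right].$$ Then $0\le\mathbb{B}(F,\mathbf{f},M;C)\le(p')^pCF$, $\mathbb{B}(t^pF,t\mathbf{f},M;C)=t^p\mathbb{B}(F,\mathbf{f},M;C)$ for $t\ge0$, and for all triples $(F,\mathbf{f},M),(F_\pm,\mathbf{f}_\pm,M_\pm)\in\Omega_C$ with $F=\tfrac12(F_++F_-)$, $\mathbf{f}=\tfrac12(\mathbf{f}_++\mathbf{f}_-)$, $M=\Delta M+\tfrac12(M_++M_-)$, $0\le\Delta M\le M$, $$\mathbb{B}(F,\mathbf{f},M;C)\ge\tfrac12\{\mathbb{B}(F_+,\mathbf{f}_+,M_+;C)+\mathbb{B}(F_-,\mathbf{f}_-,M_-;C)\}+\Delta M\,\mathbf{f}^p.$$ *)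

From Stdlib Require Import Reals.
Open Scope R_scope.

(* x^y for x >= 0 (with 0^y = 0, y > 0); Stdlib's Rpower is only meaningful
   for x > 0 (Rpower 0 y = 1), so we patch the value at 0. *)
Definition rpow (x y : R) : R := if Rle_dec x 0 then 0 else Rpower x y.

Definition conj_exp (p : R) : R := p / (p - 1).

Definition inOmega (p C F f M : R) : Prop :=
  0 <= f /\ rpow f p <= F /\ 0 <= M /\ M <= C.

Definition Bell (p C F f M : R) : R :=
  C * (rpow (conj_exp p) p * F
       - rpow (p * f) p / ((p - 1) * rpow (M / C + p - 1) (p - 1))).

From Stdlib Require Import Reals Lra.
Open Scope R_scope.

(* With [D := M/C + p - 1], [B = C (p'^p F - p^p/(p-1) * f^p / D^(p-1))].  The map
   [(f, D) |-> f^p / D^(p-1)] is jointly convex (it is the perspective of [f^p]), so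
   averaging the two outer triples bounds it at [(f, D - dM/C)] from above; convexity of
   [D |-> D^(1-p)] then gains the extra [(p-1) (dM/C) f^p / D^p], and since [D <= p]
   this gain is at least [dM f^p] after multiplying by [C p^p / (p-1)].  The bounds come
   from [D >= p - 1] and [f^p <= F]. *)

Lemma Rdiv_nonneg_pos a b : 0 <= a -> 0 < b -> 0 <= a / b.
Proof. intros ha hb. apply Rmult_le_pos; [| left; apply Rinv_0_lt_compat]; assumption. Qed.

Lemma rpow_Rpower x y : 0 < x -> rpow x y = Rpower x y.
Proof. intros hx; unfold rpow; destruct (Rle_dec x 0); lra. Qed.

Lemma rpow_0_l y : rpow 0 y = 0.
Proof. unfold rpow; destruct (Rle_dec 0 0); lra. Qed.

Lemma Rpower_gt0 x y : 0 < Rpower x y.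
Proof. apply exp_pos. Qed.

Lemma rpow_ge0 x y : 0 <= rpow x y.
Proof. unfold rpow; destruct (Rle_dec x 0); [lra | left; apply Rpower_gt0]. Qed.

Lemma rpow_mult_distr a b z : 0 <= a -> 0 <= b -> rpow (a * b) z = rpow a z * rpow b z.
Proof.
  intros [ha | <-] [hb | <-]; rewrite ?Rmult_0_l, ?Rmult_0_r, ?rpow_0_l; try ring.
  rewrite !rpow_Rpower by nra. symmetry; apply Rpower_mult_distr; assumption.
Qed.

Lemma Rpower_div a b z : 0 < a -> 0 < b -> Rpower (a / b) z = Rpower a z / Rpower b z.
Proof.
  intros ha hb. unfold Rdiv, Rpower. rewrite ln_mult, ln_Rinv by (try apply Rinv_0_lt_compat; lra).
  rewrite <- exp_Ropp, <- exp_plus. f_equal; ring.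
Qed.

Lemma Rpower_eq_mul_pred x p : 0 < x -> Rpower x p = x * Rpower x (p - 1).
Proof.
  intros hx. replace p with (1 + (p - 1)) at 1 by ring.
  rewrite Rpower_plus, Rpower_1; auto.
Qed.

Lemma rpow_eq_mul_pred x p : 0 <= x -> rpow x p = x * rpow x (p - 1).
Proof.
  intros [hx | <-]; [rewrite !rpow_Rpower by lra; apply Rpower_eq_mul_pred; lra |].
  rewrite rpow_0_l; ring.
Qed.

Lemma ln_le_sub1 x : 0 < x -> ln x <= x - 1.
Proof. intros hx. pose proof (exp_ineq1_le (ln x)) as h. rewrite exp_ln in h; lra. Qed.

(* From [u^(p-1) >= 1 + (p-1) ln u] and [u ln u >= u - 1]. *)
Lemma Rpower_bernoulli p u : 1 <= p -> 0 < u -> p * u <= Rpower u p + (p - 1).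
Proof.
  intros hp hu.
  assert (hpow : 1 + (p - 1) * ln u <= Rpower u (p - 1)) by apply exp_ineq1_le.
  assert (hlog : u - 1 <= u * ln u).
  { pose proof (ln_le_sub1 (/ u) ltac:(apply Rinv_0_lt_compat; lra)) as h.
    rewrite ln_Rinv in h by lra.
    apply Rmult_le_compat_l with (r := u) in h; [| lra].
    replace (u * (/ u - 1)) with (1 - u) in h by (field; lra). lra. }
  rewrite Rpower_eq_mul_pred by lra. nra.
Qed.

(* Convexity of [y |-> y^(-a)]. *)
Lemma Rinv_Rpower_tangent a x y : 0 <= a -> 0 < x -> 0 < y ->
  / Rpower x a - a * (y - x) / Rpower x (a + 1) <= / Rpower y a.
Proof.
  intros ha hx hy.
  assert (hv : 0 < y / x) by (apply Rdiv_lt_0_compat; lra).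
  assert (h : 1 - a * (y / x - 1) <= Rpower (y / x) (- a)).
  { unfold Rpower. pose proof (exp_ineq1_le (- a * ln (y / x))). pose proof (ln_le_sub1 _ hv). nra. }
  rewrite Rpower_Ropp, Rpower_div in h by lra.
  rewrite Rpower_plus, Rpower_1 by lra.
  pose proof (Rpower_gt0 x a). pose proof (Rpower_gt0 y a).
  apply Rmult_le_compat_l with (r := / Rpower x a) in h; [| left; apply Rinv_0_lt_compat; lra].
  replace (/ Rpower x a * / (Rpower y a / Rpower x a)) with (/ Rpower y a) in h by (field; lra).
  replace (/ Rpower x a * (1 - a * (y / x - 1)))
    with (/ Rpower x a - a * (y - x) / (Rpower x a * x)) in h by (field; lra).
  exact h.
Qed.

Definition persp (p g y : R) : R := rpow g p / Rpower y (p - 1).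

Lemma persp_ge0 p g y : 0 <= persp p g y.
Proof. apply Rdiv_nonneg_pos; [apply rpow_ge0 | apply Rpower_gt0]. Qed.

Lemma persp_antitone p g y1 y2 : 1 <= p -> 0 < y1 <= y2 -> persp p g y2 <= persp p g y1.
Proof.
  intros hp hy. unfold persp, Rdiv. apply Rmult_le_compat_l; [apply rpow_ge0 |].
  apply Rinv_le_contravar; [apply Rpower_gt0 | apply Rle_Rpower_l; lra].
Qed.

Lemma persp_mult p t g y : 0 <= t -> 0 <= g ->
  persp p (t * g) y = rpow t p * persp p g y.
Proof. intros ht hg. unfold persp, Rdiv. rewrite rpow_mult_distr by assumption. ring. Qed.

Lemma persp_ray p r y : 0 <= r -> 0 < y -> persp p (r * y) y = rpow r p * y.
Proof.
  intros hr hy. rewrite persp_mult by lra. unfold persp.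
  rewrite (rpow_Rpower y), (Rpower_eq_mul_pred y p) by lra.
  field. apply Rgt_not_eq, Rpower_gt0.
Qed.

Lemma persp_ge_tangent p g y r : 1 < p -> 0 <= g -> 0 < y -> 0 <= r ->
  p * rpow r (p - 1) * g - (p - 1) * rpow r p * y <= persp p g y.
Proof.
  intros hp hg hy [hr | <-].
  2: { rewrite !rpow_0_l. pose proof (persp_ge0 p g y). nra. }
  destruct hg as [hg | <-].
  2: { unfold persp. rewrite rpow_0_l, Rdiv_0_l. pose proof (rpow_ge0 r p).
       assert (0 <= (p - 1) * rpow r p * y) by (apply Rmult_le_pos; [apply Rmult_le_pos |]; lra).
       lra. }
  assert (hu : 0 < g / (r * y)) by (apply Rdiv_lt_0_compat; nra).
  pose proof (Rpower_bernoulli p _ ltac:(lra) hu) as hb.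
  rewrite Rpower_div, <- Rpower_mult_distr in hb by nra.
  unfold persp. rewrite !rpow_Rpower by lra.
  rewrite (Rpower_eq_mul_pred r p), (Rpower_eq_mul_pred y p) in hb by lra.
  rewrite (Rpower_eq_mul_pred r p) by lra.
  pose proof (Rpower_gt0 r (p - 1)). pose proof (Rpower_gt0 y (p - 1)).
  apply Rmult_le_compat_l with (r := r * Rpower r (p - 1) * y) in hb; [| left; repeat apply Rmult_lt_0_compat; lra].
  replace (r * Rpower r (p - 1) * y * (p * (g / (r * y)))) with (p * Rpower r (p - 1) * g)
    in hb by (field; lra).
  replace (r * Rpower r (p - 1) * y
           * (Rpower g p / (r * Rpower r (p - 1) * (y * Rpower y (p - 1))) + (p - 1)))
    with (Rpower g p / Rpower y (p - 1) + (p - 1) * (r * Rpower r (p - 1)) * y)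
    in hb by (field; lra).
  lra.
Qed.

(* The tangent hyperplane at the midpoint is attained there and lies below both ends. *)
Lemma persp_midpoint_convex p g1 g2 y1 y2 : 1 < p -> 0 <= g1 -> 0 <= g2 -> 0 < y1 -> 0 < y2 ->
  persp p ((g1 + g2) / 2) ((y1 + y2) / 2) <= (persp p g1 y1 + persp p g2 y2) / 2.
Proof.
  intros hp hg1 hg2 hy1 hy2.
  set (y := (y1 + y2) / 2).
  set (r := (g1 + g2) / 2 / y).
  assert (hy : 0 < y) by (unfold y; lra).
  assert (hr : 0 <= r) by (apply Rdiv_nonneg_pos; lra).
  assert (hg : (g1 + g2) / 2 = r * y) by (unfold r; field; lra).
  pose proof (persp_ge_tangent p g1 y1 r hp hg1 hy1 hr).
  pose proof (persp_ge_tangent p g2 y2 r hp hg2 hy2 hr).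
  assert (hsum : p * rpow r (p - 1) * g1 + p * rpow r (p - 1) * g2 = 2 * p * rpow r p * y).
  { rewrite (rpow_eq_mul_pred r p) by assumption.
    replace (2 * p * (r * rpow r (p - 1)) * y) with (2 * p * rpow r (p - 1) * (r * y)) by ring.
    rewrite <- hg. field. }
  rewrite hg, persp_ray by assumption.
  unfold y in *. lra.
Qed.

Lemma persp_sub_ge p g D d : 1 <= p -> 0 <= d < D ->
  persp p g D + (p - 1) * d * rpow g p / Rpower D p <= persp p g (D - d).
Proof.
  intros hp hd.
  pose proof (Rinv_Rpower_tangent (p - 1) D (D - d) ltac:(lra) ltac:(lra) ltac:(lra)) as h.
  replace (p - 1 + 1) with p in h by ring.
  pose proof (Rpower_gt0 D p). pose proof (Rpower_gt0 D (p - 1)).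
  replace (/ Rpower D (p - 1) - (p - 1) * (D - d - D) / Rpower D p)
    with (/ Rpower D (p - 1) + (p - 1) * d / Rpower D p) in h by (field; lra).
  apply Rmult_le_compat_l with (r := rpow g p) in h; [| apply rpow_ge0].
  unfold persp, Rdiv in *. lra.
Qed.

Lemma conj_exp_pow p : 1 < p ->
  rpow (conj_exp p) p = Rpower p p / (p - 1) / Rpower (p - 1) (p - 1).
Proof.
  intros hp. unfold conj_exp.
  rewrite rpow_Rpower, Rpower_div, (Rpower_eq_mul_pred (p - 1) p) by (try apply Rdiv_lt_0_compat; lra).
  pose proof (Rpower_gt0 (p - 1) (p - 1)). field. split; lra.
Qed.

Lemma Bell_persp p C F f M : 1 < p -> 0 < C -> 0 <= f -> 0 <= M ->
  Bell p C F f M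
  = C * (rpow (conj_exp p) p * F - Rpower p p / (p - 1) * persp p f (M / C + p - 1)).
Proof.
  intros hp hC hf hM.
  pose proof (Rdiv_nonneg_pos M C hM hC).
  unfold Bell, persp.
  rewrite rpow_mult_distr, (rpow_Rpower p), (rpow_Rpower (M / C + p - 1)) by lra.
  pose proof (Rpower_gt0 (M / C + p - 1) (p - 1)). field. lra.
Qed.

Lemma Bell_bounds p C F f M : 1 < p -> 0 < C -> inOmega p C F f M ->
  0 <= Bell p C F f M /\ Bell p C F f M <= rpow (conj_exp p) p * C * F.
Proof.
  intros hp hC (hf & hfF & hM0 & hMC).
  rewrite Bell_persp by assumption.
  pose proof (Rdiv_nonneg_pos M C hM0 hC).
  pose proof (persp_antitone p f (p - 1) (M / C + p - 1) ltac:(lra) ltac:(lra)) as hmono.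
  pose proof (persp_ge0 p f (M / C + p - 1)) as hpos.
  unfold persp at 2 in hmono.
  rewrite conj_exp_pow in * by assumption.
  set (K := Rpower p p / (p - 1)) in *.
  set (Q := Rpower (p - 1) (p - 1)) in *.
  set (P := persp p f (M / C + p - 1)) in *.
  assert (hK : 0 < K) by (apply Rdiv_lt_0_compat; [apply Rpower_gt0 | lra]).
  assert (hQ : 0 < Q) by apply Rpower_gt0.
  assert (hKP : 0 <= K * P <= K / Q * rpow f p).
  { split; [apply Rmult_le_pos; lra |].
    replace (K / Q * rpow f p) with (K * (rpow f p / Q)) by (field; lra).
    apply Rmult_le_compat_l; lra. }
  assert (hKQ : 0 <= K / Q * (F - rpow f p)).
  { apply Rmult_le_pos; [left; apply Rdiv_lt_0_compat |]; lra. }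
  split.
  - apply Rmult_le_pos; lra.
  - assert (0 <= C * (K * P)) by (apply Rmult_le_pos; lra). lra.
Qed.

Lemma Bell_homogeneous p C F f M t : 1 < p -> 0 < C -> 0 <= f -> 0 <= M -> 0 <= t ->
  Bell p C (rpow t p * F) (t * f) M = rpow t p * Bell p C F f M.
Proof.
  intros hp hC hf hM ht.
  rewrite !Bell_persp, persp_mult by (try apply Rmult_le_pos; assumption). ring.
Qed.

Lemma Bell_midpoint_concave p C F f M Fp fp Mp Fm fm Mm dM : 1 < p -> 0 < C ->
  inOmega p C F f M -> inOmega p C Fp fp Mp -> inOmega p C Fm fm Mm ->
  F = (Fp + Fm) / 2 -> f = (fp + fm) / 2 -> M = dM + (Mp + Mm) / 2 ->
  0 <= dM -> dM <= M ->
  (Bell p C Fp fp Mp + Bell p C Fm fm Mm) / 2 + dM * rpow f p <= Bell p C F f M.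
Proof.
  intros hp hC (hf & _ & hM0 & hMC) (hfp & _ & hMp & _) (hfm & _ & hMm & _) eF ef eM hd0 hdM.
  rewrite !Bell_persp by assumption.
  set (D := M / C + p - 1).
  set (d := dM / C).
  assert (hDd : (Mp / C + p - 1 + (Mm / C + p - 1)) / 2 = D - d)
    by (unfold D, d; rewrite eM; field; lra).
  assert (hd : 0 <= d <= M / C).
  { split; [apply Rdiv_nonneg_pos; lra |].
    apply Rmult_le_compat_r; [left; apply Rinv_0_lt_compat |]; lra. }
  pose proof (Rdiv_nonneg_pos Mp C hMp hC). pose proof (Rdiv_nonneg_pos Mm C hMm hC).
  assert (hconv : persp p f (D - d) <= (persp p fp (Mp / C + p - 1) + persp p fm (Mm / C + p - 1)) / 2).
  { rewrite <- hDd, ef. apply persp_midpoint_convex; lra. }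
  assert (hgain : persp p f D + (p - 1) * d * rpow f p / Rpower D p <= persp p f (D - d)).
  { apply persp_sub_ge; unfold D; lra. }
  assert (hDp : Rpower D p <= Rpower p p).
  { apply Rle_Rpower_l; [lra |]. split; [unfold D; lra |].
    assert (M / C <= 1) by (apply Rmult_le_reg_r with C; [lra | field_simplify; lra]).
    unfold D; lra. }
  assert (hscale : dM * rpow f p
                   <= C * (Rpower p p / (p - 1)) * ((p - 1) * d * rpow f p / Rpower D p)).
  { pose proof (Rpower_gt0 D p). pose proof (rpow_ge0 f p).
    replace (C * (Rpower p p / (p - 1)) * ((p - 1) * d * rpow f p / Rpower D p))
      with (dM * rpow f p * (Rpower p p / Rpower D p)) by (unfold d; field; lra).
    rewrite <- (Rmult_1_r (dM * rpow f p)) at 1.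
    apply Rmult_le_compat_l; [apply Rmult_le_pos; lra |].
    apply Rmult_le_reg_r with (Rpower D p); [lra | field_simplify; lra]. }
  assert (hK : 0 < C * (Rpower p p / (p - 1))).
  { apply Rmult_lt_0_compat; [lra | apply Rdiv_lt_0_compat; [apply Rpower_gt0 | lra]]. }
  rewrite eF. nra.
Qed.

Theorem mainTheorem10 (p C : R) (hp : 1 < p) (hC : 0 < C) :
  (forall F f M, inOmega p C F f M ->
     0 <= Bell p C F f M /\ Bell p C F f M <= rpow (conj_exp p) p * C * F) /\
  (forall F f M t, inOmega p C F f M -> 0 <= t ->
     Bell p C (rpow t p * F) (t * f) M = rpow t p * Bell p C F f M) /\
  (forall F f M Fp fp Mp Fm fm Mm dM,
     inOmega p C F f M -> inOmega p C Fp fp Mp -> inOmega p C Fm fm Mm ->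
     F = (Fp + Fm) / 2 -> f = (fp + fm) / 2 -> M = dM + (Mp + Mm) / 2 ->
     0 <= dM -> dM <= M ->
     Bell p C F f M >= (Bell p C Fp fp Mp + Bell p C Fm fm Mm) / 2 + dM * rpow f p).
Proof.
  split; [| split].
  - intros F f M hO. exact (Bell_bounds p C F f M hp hC hO).
  - intros F f M t (hf & _ & hM & _) ht. exact (Bell_homogeneous p C F f M t hp hC hf hM ht).
  - intros. apply Rle_ge. eapply Bell_midpoint_concave; eassumption.
Qed.
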